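(* Let $(L,\le,(\sqsubseteq_\alpha)_{\alpha<\kappa})$ be a model of Axioms 1–4 with $\kappa$ a limit ordinal. Let $x\in L$, $\alpha<\kappa$, and let $y=x|_\alpha=\bigsqcup_\alpha\{x\}$. Then $y\in[x]_\alpha$. Moreover, $y$ is the $\le$-least element of $[x]_\alpha$, and $y\sqsubseteq_{\alpha+1}z$ for every $z\in[x]_\alpha$.
   Context: Setting (model of Axioms 1–4). Let $(L,\le)$ be a complete lattice with join operation $\bigvee$ and least element $\perp$. Let $\kappa>0$ be an ordinal, and for each ordinal $\alpha<\kappa$ let $\sqsubseteq_\alpha$ be a preorder on $L$. Derived relations: - $x=_\alpha y$ means $x\sqsubseteq_\alpha y$ and $y\sqsubseteq_\alpha x$. - $x\sqsubset_\alpha y$ means $x\sqsubseteq_\alpha y$ and not $x=_\alpha y$. Derived sets, for $x\in L$ and $\alpha<\kappa$: - $(x]_\alpha=\{y\in L:\forall\beta<\alpha,\ x=_\beta y\}$. - $[x]_\alpha=\{y\in L: x=_\alpha y\}$. For a set $X$, $X\sqsubseteq_\alpha y$ means $x\sqsubseteq_\alpha y$ for all $x\in X$. The structure is a model of Axioms 1–4 if: - (A1) for all $\alpha<\beta<\kappa$, $x\sqsubseteq_\beta y$ implies $x=_\alpha y$; - (A2) $\bigcap_{\alpha<\kappa}=_\alpha$ is the identity relation on $L$; - (A3) for every $x\in L$, every $\alpha<\kappa$ and every $X\subseteq(x]_\alpha$ there is $y\in(x]_\alpha$ with $X\sqsubseteq_\alpha y$ such that for all $z\in(x]_\alpha$ with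 $X\sqsubseteq_\alpha z$ we have $y\sqsubseteq_\alpha z$ and $y\le z$; - (A4) for every nonempty $X\subseteq L$, every $\alpha<\kappa$ and every $y\in L$, if $y=_\alpha x$ for all $x\in X$ then $y=_\alpha\bigvee X$. The element $y$ of (A3) is unique and is denoted $\bigsqcup_\alpha X$. The slice of $x$ at $\alpha$ is $x|_\alpha:=\bigsqcup_\alpha\{x\}$, where $\{x\}\subseteq(x]_\alpha$. *)

From Stdlib Require Import Relations Wellfounded.

Set Implicit Arguments.

Definition is_lub {L : Type} (le : L -> L -> Prop) (X : L -> Prop) (s : L) : Prop :=
  (forall x, X x -> le x s) /\ (forall u, (forall x, X x -> le x u) -> le s u).

Definition complete_lattice {L : Type} (le : L -> L -> Prop)
  (join : (L -> Prop) -> L) : Prop :=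
  (forall x, le x x) /\
  (forall x y z, le x y -> le y z -> le x z) /\
  (forall x y, le x y -> le y x -> x = y) /\
  (forall X, is_lub le X (join X)).

(** * Ordinals: the ordinals below kappa are modelled by a type I with a strict
    well-order lt (every well-order is isomorphic to a unique ordinal). *)
Definition strict_well_order {I : Type} (lt : I -> I -> Prop) : Prop :=
  (forall a, ~ lt a a) /\
  (forall a b c, lt a b -> lt b c -> lt a c) /\
  (forall a b, lt a b \/ a = b \/ lt b a) /\
  well_founded lt.

(** kappa is a limit ordinal: kappa > 0 and for every alpha < kappa, alpha+1 < kappa *)
Definition limit_order {I : Type} (lt : I -> I -> Prop) : Prop :=
  inhabited I /\ (forall a, exists b, lt a b).

Definition is_succ {I : Type} (lt : I -> I -> Prop) (a b : I) : Prop :=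
  lt a b /\ (forall c, lt a c -> c = b \/ lt b c).

Section Derived.
Variables (I L : Type) (lt : I -> I -> Prop) (sq : I -> L -> L -> Prop).

Definition eqa (a : I) (x y : L) : Prop := sq a x y /\ sq a y x.

Definition lower_class (x : L) (a : I) (y : L) : Prop :=
  forall b, lt b a -> eqa b x y.

Definition class (x : L) (a : I) (y : L) : Prop := eqa a x y.

Definition set_sq (a : I) (X : L -> Prop) (y : L) : Prop :=
  forall x, X x -> sq a x y.
End Derived.

(** y is the element provided by Axiom 3 for x, a, X  (i.e. y = ⊔_a X) *)
Definition is_bsup {I L : Type} (lt : I -> I -> Prop) (sq : I -> L -> L -> Prop)
  (le : L -> L -> Prop) (x : L) (a : I) (X : L -> Prop) (y : L) : Prop :=
  lower_class lt sq x a y /\ set_sq sq a X y /\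
  (forall z, lower_class lt sq x a z -> set_sq sq a X z -> sq a y z /\ le y z).

Definition model_A1_4 {I L : Type} (lt : I -> I -> Prop) (le : L -> L -> Prop)
  (join : (L -> Prop) -> L) (sq : I -> L -> L -> Prop) : Prop :=
  complete_lattice le join /\
  strict_well_order lt /\
  inhabited I /\
  (forall a, (forall x, sq a x x) /\ (forall x y z, sq a x y -> sq a y z -> sq a x z)) /\
  (forall a b x y, lt a b -> sq b x y -> eqa sq a x y) /\
  (forall x y, (forall a, eqa sq a x y) -> x = y) /\
  (forall x a (X : L -> Prop), (forall w, X w -> lower_class lt sq x a w) ->
     exists y, is_bsup lt sq le x a X y) /\
  (forall (X : L -> Prop) a y, (exists w, X w) ->
     (forall w, X w -> eqa sq a y w) -> eqa sq a y (join X)).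


Set Implicit Arguments.

(** By Axiom 1, [x]_a ⊆ (x]_a, so every z ∈ [x]_a is an upper
    bound of {x} inside (x]_a; the universal property of ⊔_a {x} then gives
    y ⊑_a z and y ≤ z.  Taking z = x yields x =_a y, i.e. y ∈ [x]_a.
    For the successor b = a+1, the classes satisfy [x]_a ⊆ (x]_b (the ordinals
    below b are those below a, together with a itself).  The element
    w = ⊔_b ∅ lies ⊑_b-below all of (x]_b; it belongs to (x]_b ⊆ [x]_a, hence
    y ≤ w, while y ∈ (x]_b gives w ≤ y.  So y = w by antisymmetry, and the
    ⊑_b-minimality of w is the claim.  (The limit hypothesis on kappa only
    guarantees that a+1 exists; the statement quantifies over it anyway.) *)

Section Slices.
Variables (I L : Type) (lt : I -> I -> Prop) (le : L -> L -> Prop)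
  (sq : I -> L -> L -> Prop).

Hypothesis sq_refl : forall a x, sq a x x.
Hypothesis axiom1 : forall a b x y, lt a b -> sq b x y -> eqa sq a x y.

Lemma class_sub_lower_class (x : L) (a : I) (z : L) :
  class sq x a z -> lower_class lt sq x a z.
Proof. intros [Hxz _] c Hc. exact (axiom1 Hc Hxz). Qed.

Lemma slice_below_class (x : L) (a : I) (y : L) :
  is_bsup lt sq le x a (fun w => w = x) y ->
  forall z, class sq x a z -> sq a y z /\ le y z.
Proof.
  intros [_ [_ Hymin]] z Hz. apply Hymin.
  - exact (class_sub_lower_class Hz).
  - intros w ->. exact (proj1 Hz).
Qed.

Lemma slice_in_class (x : L) (a : I) (y : L) :
  is_bsup lt sq le x a (fun w => w = x) y -> class sq x a y.
Proof.
  intros Hy. split.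
  - exact (proj1 (proj2 Hy) x eq_refl).
  - apply (slice_below_class Hy). split; apply sq_refl.
Qed.

Lemma bsup_empty_least (x : L) (b : I) (w : L) :
  is_bsup lt sq le x b (fun _ => False) w ->
  forall z, lower_class lt sq x b z -> sq b w z /\ le w z.
Proof. intros [_ [_ Hwmin]] z Hz. apply Hwmin; [exact Hz | intros v []]. Qed.

Hypothesis lt_irrefl : forall a, ~ lt a a.
Hypothesis lt_trans : forall a b c, lt a b -> lt b c -> lt a c.
Hypothesis lt_total : forall a b, lt a b \/ a = b \/ lt b a.

Lemma lt_succ_inv (a b c : I) : is_succ lt a b -> lt c b -> lt c a \/ c = a.
Proof.
  intros [_ Hsucc] Hcb.
  destruct (lt_total c a) as [H | [H | H]]; auto.
  exfalso. destruct (Hsucc c H) as [-> | Hbc].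
  - exact (lt_irrefl Hcb).
  - exact (lt_irrefl (lt_trans Hbc Hcb)).
Qed.

Lemma class_sub_lower_class_succ (x : L) (a b : I) (z : L) :
  is_succ lt a b -> class sq x a z -> lower_class lt sq x b z.
Proof.
  intros Hab Hz c Hcb.
  destruct (lt_succ_inv Hab Hcb) as [Hca | ->].
  - exact (class_sub_lower_class Hz Hca).
  - exact Hz.
Qed.

Hypothesis le_antisym : forall x y, le x y -> le y x -> x = y.

Lemma slice_eq_bsup_empty_succ (x : L) (a b : I) (y w : L) :
  is_bsup lt sq le x a (fun v => v = x) y -> is_succ lt a b ->
  is_bsup lt sq le x b (fun _ => False) w -> y = w.
Proof.
  intros Hy Hab Hw.
  apply le_antisym.
  - apply (slice_below_class Hy). exact (proj1 Hw a (proj1 Hab)).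
  - apply (bsup_empty_least Hw).
    exact (class_sub_lower_class_succ Hab (slice_in_class Hy)).
Qed.

End Slices.

Theorem mainTheorem6 (I L : Type) (lt : I -> I -> Prop) (le : L -> L -> Prop)
  (join : (L -> Prop) -> L) (sq : I -> L -> L -> Prop) :
  model_A1_4 lt le join sq ->
  limit_order lt ->
  forall (x : L) (a : I) (y : L),
    is_bsup lt sq le x a (fun w => w = x) y ->   (* y = x|_a = ⊔_a {x} *)
    class sq x a y /\
    (forall z, class sq x a z -> le y z) /\
    (forall b, is_succ lt a b -> forall z, class sq x a z -> sq b y z).
Proof.
  intros [[_ [_ [le_antisym _]]] [[lt_irrefl [lt_trans [lt_total _]]]
          [_ [sq_pre [axiom1 [_ [axiom3 _]]]]]]] _ x a y Hy.
  assert (sq_refl : forall c v, sq c v v) by (intros c; apply sq_pre).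
  split; [| split].
  - exact (slice_in_class sq_refl axiom1 Hy).
  - intros z Hz. exact (proj2 (slice_below_class axiom1 Hy Hz)).
  - intros b Hab z Hz.
    destruct (axiom3 x b (fun _ => False)) as [w Hw]; [intros v [] |].
    rewrite (slice_eq_bsup_empty_succ sq_refl axiom1 lt_irrefl lt_trans lt_total
               le_antisym Hy Hab Hw).
    apply (bsup_empty_least Hw).
    exact (class_sub_lower_class_succ axiom1 lt_irrefl lt_trans lt_total Hab Hz).
Qed.
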